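(* For every fixed integer $l \ge 2$ there is a constant $c$ depending only on $l$ such that, for all integers $q$ large enough and all $n > c q^2$, AME states of defect $l$ in $(\mathbb{C}^q)^{\otimes n}$ do not exist.
   Context: A pure state $|\psi\rangle \in (\mathbb{C}^q)^{\otimes n}$ is called $k$-uniform if, with $\rho = |\psi\rangle\langle\psi|$, for every subset $S \subseteq \{1,\dots,n\}$ with $|S| = k$ the reduced state of $\rho$ on the parties in $S$ equals $I/q^k$, where $I$ is the identity on $(\mathbb{C}^q)^{\otimes k}$. For an integer $l \ge 0$, an AME state of defect $l$ in $(\mathbb{C}^q)^{\otimes n}$ is a $(\lfloor n/2\rfloor - l)$-uniform state in $(\mathbb{C}^q)^{\otimes n}$. *)

From mathcomp Require Import all_boot all_order all_algebra.
From mathcomp Require Import complex.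
From mathcomp Require Import Rstruct.
Set Implicit Arguments. Unset Strict Implicit. Unset Printing Implicit Defensive.
Import Order.TTheory GRing.Theory Num.Theory.
Local Open Scope ring_scope.

Definition CC : numClosedFieldType := complex Rdefinitions.R.

(* Computational basis of (C^q)^{\otimes n}: words x : 'I_n -> 'I_q.
   A vector psi in (C^q)^{\otimes n} is its coordinate function. *)
Definition basis_idx (q n : nat) := {ffun 'I_n -> 'I_q}.
Definition qvec (q n : nat) := basis_idx q n -> CC.

Definition unit_vec (q n : nat) (psi : qvec q n) : Prop :=
  \sum_(x : basis_idx q n) psi x * (psi x)^* = 1.

(* Matrix entry <a_S| Tr_{S^c}(|psi><psi|) |b_S> of the reduced state of
   rho = |psi><psi| on the parties in S, where the basis states a_S, b_S of the
   parties in S are given by the restrictions to S of words a, b. *)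
Definition reduced_entry (q n : nat) (psi : qvec q n) (S : {set 'I_n})
    (a b : basis_idx q n) : CC :=
  \sum_(x : basis_idx q n | [forall i, (i \in S) ==> (x i == a i)])
   \sum_(y : basis_idx q n | [forall i, (i \in S) ==> (y i == b i)]
                            && [forall i, (i \notin S) ==> (x i == y i)])
     psi x * (psi y)^*.

Definition k_uniform (q n k : nat) (psi : qvec q n) : Prop :=
  unit_vec psi /\
  forall S : {set 'I_n}, #|S| = k ->
    forall a b : basis_idx q n,
      reduced_entry psi S a b =
      (if [forall i, (i \in S) ==> (a i == b i)] then (q ^ k)%:R^-1 else 0).

Definition AME_defect (q n l : nat) (psi : qvec q n) : Prop :=
  k_uniform (n./2 - l) psi.

From mathcomp Require Import all_boot all_order all_algebra.
From mathcomp Require Import complex.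
From mathcomp Require Import Rstruct.
From mathcomp Require Import ring zify.
Set Implicit Arguments. Unset Strict Implicit. Unset Printing Implicit Defensive.
Import Order.TTheory GRing.Theory Num.Theory.
Local Open Scope ring_scope.

(* For a set V of parties let f(V) = q^|V| Tr(rho_V^2).  The partial
   depolarisations E_Z (trace out the parties in Z and put back the maximally
   mixed state) are self-adjoint for the Hilbert-Schmidt product and satisfy
   E_A E_B = E_(A u B), so the vectors E_Z rho have Gram matrix
   <E_A rho, E_B rho> = <rho, E_(A u B) rho>.  Inclusion-exclusion over subsets
   then writes f(V) = sum_(U <= V) a(U) with every a(U) a squared norm.  For a
   k-uniform state f(W) = 1 whenever |W| <= k, which forces a(U) = 0 for
   0 < |U| <= k; counting how often each a(U) occurs gives
   sum_(i in T) f(T \ i) <= (|T| - k - 1) f(T) + k + 1 for |T| > k.  For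
   |T| = n - k + 1 both sides are known by the Schmidt symmetry
   Tr(rho_V^2) = Tr(rho_(V^c)^2), and with m = n - 2k the inequality reads
   (n - k + 1) q^m <= m q^(m+2) + k + 1.  For an AME state of defect l we have
   m <= 2l + 1 while k is about n/2, so this fails as soon as n > (9l + 4) q^2. *)

Section SubsetSums.
Variable I : finType.
Implicit Types (U V Y : {set I}).

Lemma setU1_ind (P : {set I} -> Prop) :
  P set0 -> (forall a U, a \notin U -> P U -> P (a |: U)) -> forall U, P U.
Proof.
move=> P0 PU1 U; move: {2}#|U| (erefl #|U|) => m.
elim: m U => [|m IH] U; first by move/eqP; rewrite cards_eq0 => /eqP ->.
move=> cU; have [a aU] : exists a, a \in U by apply/set0Pn; rewrite -cards_eq0 cU.
rewrite -(setD1K aU); apply: PU1; first by rewrite !inE eqxx.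
by apply: IH; move: cU; rewrite (cardsD1 a U) aU => -[].
Qed.

Lemma big_subset0 (R : nmodType) (F : {set I} -> R) :
  \sum_(Y : {set I} | Y \subset set0) F Y = F set0.
Proof. by rewrite (eq_bigl (pred1 set0)) ?big_pred1_eq // => Y; rewrite subset0. Qed.

Lemma big_subsetU1 (R : nmodType) a U (F : {set I} -> R) : a \notin U ->
  \sum_(Y : {set I} | Y \subset a |: U) F Y =
  \sum_(Y : {set I} | Y \subset U) F Y + \sum_(Y : {set I} | Y \subset U) F (a |: Y).
Proof.
move=> aU; rewrite (bigID (fun Y : {set I} => a \in Y)) [RHS]addrC /=; congr (_ + _).
  rewrite (reindex_onto (fun Y => a |: Y) (fun Y => Y :\ a)) /=; last first.
    by move=> Y /andP[_ aY]; rewrite setD1K.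
  apply: eq_bigl => Y; rewrite setU11 andbT -{2}(setU1K aU) subsetD1 subUset sub1set setU11.
  have [aY | aY] := boolP (a \in Y); last by rewrite setU1K // eqxx andbT.
  have -> : a |: Y = Y by apply/setUidPr; rewrite sub1set.
  by rewrite eq_sym eqEsubset subsetD1 subxx aY !andbF.
by apply: eq_bigl => Y; rewrite -{2}(setU1K aU) subsetD1.
Qed.

Lemma subsetU1_card (a : I) U Y : a \notin U -> Y \subset U -> #|a |: Y| = #|Y|.+1.
Proof. by move=> aU /subsetP sYU; rewrite cardsU1 (contra (sYU a) aU). Qed.

Lemma sum_subset2_sign_setU (R : pzRingType) U (h : {set I} -> R) :
  \sum_(Y : {set I} | Y \subset U) \sum_(Y' : {set I} | Y' \subset U)
     (-1) ^+ (#|Y| + #|Y'|) * h (Y :|: Y') =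
  \sum_(Y : {set I} | Y \subset U) (-1) ^+ #|Y| * h Y.
Proof.
elim/setU1_ind: U h => [|a U aU IH] h; first by rewrite !big_subset0 cards0 setU0.
have cardU1 := subsetU1_card aU.
rewrite !big_subsetU1 //.
under eq_bigr => Y sY do rewrite big_subsetU1 //.
under [in X in _ + X = _]eq_bigr => Y sY do rewrite big_subsetU1 //.
rewrite [X in _ + X = _]big1 ?addr0 => [|Y sY]; last first.
  rewrite -big_split big1 // => Y' sY'.
  rewrite !cardU1 // addSn addnS !exprS !mulN1r !mulNr opprK.
  have -> : a |: Y :|: (a |: Y') = a |: Y :|: Y'.
    by apply/setP => x; rewrite !inE; case: (x == a).
  exact: addNr.
rewrite big_split /= IH; congr (_ + _).
transitivity (- \sum_(Y : {set I} | Y \subset U) (-1) ^+ #|Y| * h (a |: Y)).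
  rewrite -(IH (fun Y => h (a |: Y))) -sumrN; apply: eq_bigr => Y _.
  rewrite -sumrN; apply: eq_bigr => Y' sY'.
  by rewrite cardU1 // addnS exprS mulN1r mulNr setUCA.
by rewrite -sumrN; apply: eq_bigr => Y sY; rewrite cardU1 // exprS mulN1r mulNr.
Qed.

Lemma sum_subset_moebius (R : pzRingType) V (F : {set I} -> R) :
  \sum_(U : {set I} | U \subset V) \sum_(Y : {set I} | Y \subset U)
     (-1) ^+ #|Y| * F (Y :|: ~: U) = F (~: V).
Proof.
elim/setU1_ind: V F => [|a V aV IH] F; first by rewrite !big_subset0 cards0 set0U mul1r.
rewrite big_subsetU1 // -big_split /= setCU setIC -setDE -(IH (fun Z => F (Z :\ a))).
apply: eq_bigr => U sU; have aU : a \notin U by apply: contra aV; apply: (subsetP sU).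
have aY Y : Y \subset U -> a \notin Y by move=> /subsetP sYU; apply: contra aU; apply: sYU.
rewrite big_subsetU1 //.
rewrite [X in _ + (_ + X)](eq_bigr (fun Y => - ((-1) ^+ #|Y| * F (Y :|: ~: U)))).
  rewrite sumrN addrCA subrr addr0; apply: eq_bigr => Y sY; congr (_ * F _).
  by apply/setP => x; rewrite !inE; case: eqVneq => [->|]; rewrite ?(negbTE (aY _ sY)).
move=> Y sY; rewrite (subsetU1_card aU) // exprS mulN1r mulNr; congr (- (_ * F _)).
by apply/setP => x; rewrite !inE; case: eqVneq => [->|]; rewrite ?(negbTE aU) ?orbT.
Qed.

End SubsetSums.

Lemma exists_superset_card (I : finType) (W : {set I}) k :
  (#|W| <= k <= #|I|)%N -> exists2 W' : {set I}, W \subset W' & #|W'| = k.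
Proof.
elim: k => [|k IH] /andP[leWk lekI].
  by exists W => //; apply/eqP; rewrite -leqn0.
have [eqWk|ltWk] := eqVneq #|W| k.+1; first by exists W.
have [W' sWW' cW'] : exists2 W' : {set I}, W \subset W' & #|W'| = k.
  by apply: IH; rewrite -ltnS ltn_neqAle ltWk leWk ltnW.
have : (0 < #|~: W'|)%N by move: (cardsC W'); rewrite cW'; lia.
case/card_gt0P => j; rewrite inE => jW'.
by exists (j |: W'); rewrite ?cardsU1 ?jW' ?cW' // (subset_trans sWW') ?subsetU1.
Qed.

Lemma sum_subset_setD1 (R : nmodType) (I : finType) (a : {set I} -> R) (T : {set I}) :
  \sum_(i in T) \sum_(U : {set I} | U \subset T :\ i) a U =
  \sum_(U : {set I} | U \subset T) a U *+ #|T :\: U|.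
Proof.
under eq_bigr => i _ do rewrite big_mkcond /=.
rewrite exchange_big [RHS]big_mkcond /=; apply: eq_bigr => U _.
rewrite -big_mkcondr /=; case: ifP => sUT.
  by rewrite -sumr_const; apply: eq_bigl => i; rewrite subsetD1 sUT !inE andbC.
by rewrite big_pred0 // => i; rewrite subsetD1 sUT andbF.
Qed.

Section NonnegativeSubsetSums.
Variables (R : numDomainType) (I : finType) (a : {set I} -> R).
Implicit Types (U V W T : {set I}).
Hypothesis a_ge0 : forall U, 0 <= a U.
Local Notation f V := (\sum_(U : {set I} | U \subset V) a U).

Lemma le_sum_subset V W : V \subset W -> f V <= f W.
Proof.
move=> sVW; rewrite [leRHS](bigID (fun U : {set I} => U \subset V)) /=.
rewrite [leLHS](eq_bigl (fun U : {set I} => (U \subset W) && (U \subset V))).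
  by rewrite lerDl sumr_ge0.
by move=> U; apply/idP/andP => [sUV|[]//]; rewrite (subset_trans sUV).
Qed.

Lemma lerD_sum_subset U1 U2 W : U1 \subset W -> U2 \subset W -> U1 != U2 ->
  a U1 + a U2 <= f W.
Proof.
move=> sU1 sU2 neqU; rewrite (bigD1 U1) //= lerD2l (bigD1 U2) /=; last by rewrite sU2 eq_sym.
by rewrite lerDl sumr_ge0.
Qed.

Variable k : nat.
Hypotheses (a0 : a set0 = 1) (le_k_card : (k <= #|I|)%N).
Hypothesis sum_subset_k : forall W, #|W| = k -> f W = 1.

Lemma sum_subset_small W : (#|W| <= k)%N -> f W = 1.
Proof.
move=> leWk; have [W' sWW' /sum_subset_k fW'] : exists2 W' : {set I}, W \subset W' & #|W'| = k.
  by apply: exists_superset_card; rewrite leWk le_k_card.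
apply/le_anti/andP; split; first by rewrite -fW' le_sum_subset.
by have := le_sum_subset (sub0set W); rewrite big_subset0 a0.
Qed.

Lemma weight_small U : U != set0 -> (#|U| <= k)%N -> a U = 0.
Proof.
move=> U0 leUk; apply/le_anti; rewrite a_ge0 andbT.
have := lerD_sum_subset (sub0set U) (subxx U); rewrite eq_sym => /(_ U0).
by rewrite a0 sum_subset_small // -[leRHS]addr0 lerD2l.
Qed.

Lemma sum_setD1_le T : (k < #|T|)%N ->
  \sum_(i in T) f (T :\ i) <= (#|T| - k.+1)%:R * f T + k.+1%:R.
Proof.
move=> ltkT; rewrite sum_subset_setD1 mulr_sumr.
rewrite (bigD1 set0) ?sub0set //= [in leRHS](bigD1 set0) ?sub0set //= a0 setD0 mulr1.
rewrite addrAC; apply: lerD; first by rewrite -natrD ler_nat; lia.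
apply: ler_sum => U /andP[sUT U0]; have [leUk|ltkU] := leqP #|U| k.
  by rewrite weight_small // mul0rn mulr0.
rewrite -[a U *+ _]mulr_natl ler_wpM2r // ler_nat cardsD (setIidPr sUT); lia.
Qed.

End NonnegativeSubsetSums.

Section GramInclusionExclusion.
Variables (C : numClosedFieldType) (I T : finType).
Variables (v : {set I} -> T -> C) (F : {set I} -> C).
Implicit Types (U V : {set I}).
Hypothesis dot_v : forall A B, \sum_t (v A t)^* * v B t = F (A :|: B).

Definition incl_excl_vector U t := \sum_(Y : {set I} | Y \subset U) (-1) ^+ #|Y| * v (Y :|: ~: U) t.
Definition incl_excl_weight U := \sum_t (incl_excl_vector U t)^* * incl_excl_vector U t.

Lemma incl_excl_weight_ge0 U : 0 <= incl_excl_weight U.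
Proof. by apply: sumr_ge0 => t _; rewrite mulrC mul_conjC_ge0. Qed.

Lemma incl_excl_weightE U :
  incl_excl_weight U = \sum_(Y : {set I} | Y \subset U) (-1) ^+ #|Y| * F (Y :|: ~: U).
Proof.
rewrite -(sum_subset2_sign_setU U (fun Z => F (Z :|: ~: U))) /incl_excl_weight /incl_excl_vector.
under eq_bigr => t _ do rewrite rmorph_sum mulr_suml.
rewrite exchange_big; apply: eq_bigr => Y _.
under eq_bigr => t _ do rewrite mulr_sumr.
rewrite exchange_big; apply: eq_bigr => Y' _.
under eq_bigr => t _ do rewrite rmorphM rmorphXn rmorphN1 mulrACA -exprD.
by rewrite -mulr_sumr dot_v setUACA setUid.
Qed.

Lemma sum_incl_excl_weight V : \sum_(U : {set I} | U \subset V) incl_excl_weight U = F (~: V).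
Proof. by rewrite -sum_subset_moebius; apply: eq_bigr => U _; rewrite incl_excl_weightE. Qed.

End GramInclusionExclusion.

Section Depolarization.
Variables (C : numClosedFieldType) (I A : finType).
Local Notation word := {ffun I -> A}.
Implicit Types (Z : {set I}) (x y c d : word) (g h : word -> word -> C).

Definition agree Z x y := [forall i, (i \in Z) ==> (x i == y i)].
Definition splice Z x y : word := [ffun i => if i \in Z then x i else y i].

Lemma spliceE Z x y i : splice Z x y i = if i \in Z then x i else y i.
Proof. exact: ffunE. Qed.

Lemma agreeP Z x y : reflect (forall i, i \in Z -> x i = y i) (agree Z x y).
Proof.
apply: (iffP forallP) => [xy i iZ | xy i]; first by apply/eqP; exact: implyP (xy i) iZ.
by apply/implyP => /xy ->.
Qed.

Lemma splice_setC Z x y : splice (~: Z) x y = splice Z y x.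
Proof. by apply/ffunP => i; rewrite !spliceE inE; case: (i \in Z). Qed.

Lemma agree_splice Z Z' c x y :
  agree Z' (splice Z c x) (splice Z c y) = agree (Z' :\: Z) x y.
Proof.
apply/agreeP/agreeP => xy i; last by rewrite !spliceE; case: ifP => // iZ iZ'; rewrite xy // inE iZ.
by rewrite inE => /andP[/negbTE iZ /xy]; rewrite !spliceE iZ.
Qed.

Lemma agree_setU Z Z' x y : agree (Z :|: Z') x y = agree Z x y && agree (Z' :\: Z) x y.
Proof.
apply/agreeP/andP => [xy | [/agreeP xyZ /agreeP xyZ'] i].
  split; apply/agreeP => i Hi; apply: xy; rewrite inE; first by rewrite Hi.
  by move: Hi; rewrite inE => /andP[_ ->]; rewrite orbT.
by rewrite inE; case: (boolP (i \in Z)) => [/xyZ|iZ /= iZ'] //; rewrite xyZ' // inE iZ.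
Qed.

Lemma card_agree Z d : #|[pred c | agree Z c d]| = (#|A| ^ #|~: Z|)%N.
Proof.
pose F i := if i \in Z then pred1 (d i) else predT.
have -> : #|[pred c | agree Z c d]| = #|family F|.
  apply: eq_card => c; rewrite !inE; apply/agreeP/familyP => cd i; rewrite /F.
    by case: ifP => // iZ; rewrite inE cd.
  by move=> iZ; move: (cd i); rewrite /F iZ inE => /eqP.
rewrite card_family foldrE big_image /= (bigID (mem Z)) /=.
rewrite big1 => [|i iZ]; last by rewrite /F iZ; exact: card1.
rewrite mul1n -prod_nat_const; apply: eq_big => i; first by rewrite inE.
by move/negbTE => iZ; rewrite /F iZ; apply: eq_card.
Qed.

Lemma sum_splice (R : nmodType) Z x (h : word -> R) :
  \sum_c h (splice Z c x) = (\sum_(c | agree (~: Z) c x) h c) *+ (#|A| ^ #|~: Z|).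
Proof.
rewrite (partition_big (splice Z ^~ x) (agree (~: Z) ^~ x)) /=; last first.
  by move=> c _; apply/agreeP => i; rewrite inE spliceE => /negbTE ->.
rewrite -sumrMnl; apply: eq_bigr => d dx.
rewrite (eq_bigr (fun _ => h d)) => [|c /eqP-> //]; rewrite -(card_agree Z d) -sumr_const.
apply: eq_bigl => c; rewrite !inE; apply/eqP/agreeP => [<- i iZ | cd]; first by rewrite spliceE iZ.
apply/ffunP => i; rewrite spliceE; case: ifP => iZ; first by rewrite cd.
by move/agreeP: dx => -> //; rewrite inE iZ.
Qed.

Lemma sum_splice2 (R : nmodType) Z (h : word -> R) :
  \sum_c \sum_d h (splice Z d c) = (\sum_e h e) *+ #|word|.
Proof.
pose swap (p : word * word) := (splice Z p.2 p.1, splice Z p.1 p.2).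
have swapK : involutive swap.
  by case=> c d; congr pair; apply/ffunP => i; rewrite !spliceE; case: (i \in Z).
rewrite pair_big (reindex_inj (inv_inj swapK)) /=.
rewrite (eq_bigr (fun p => h p.1)) => [|[c d] _]; last first.
  by congr h; apply/ffunP => i; rewrite !spliceE; case: (i \in Z).
rewrite -(pair_big xpredT xpredT (fun c _ => h c)) /= -sumrMnl.
by apply: eq_bigr => c _; rewrite sumr_const.
Qed.

(* As a matrix on (C^|A|)^(tensor I), [depolarize Z g] is (Tr_Z g) (x) I_Z / |A|^|Z|. *)
Definition depolarize Z g x y :=
  if agree Z x y then #|word|%:R^-1 * \sum_c g (splice Z c x) (splice Z c y) else 0.

Definition hs_dot g h := \sum_x \sum_y (g x y)^* * h x y.

Lemma depolarizeU Z Z' g x y :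
  depolarize Z (depolarize Z' g) x y = depolarize (Z :|: Z') g x y.
Proof.
have N0 : #|word|%:R != 0 :> C by rewrite pnatr_eq0 -lt0n; apply/card_gt0P; exists x.
rewrite /depolarize agree_setU; case: (agree Z x y) => //=.
under eq_bigr => c _ do rewrite agree_splice.
case: (agree (Z' :\: Z) x y); last by rewrite big1 ?mulr0.
rewrite -mulr_sumr; congr (_ * _).
have spliceU c d z : splice Z' c (splice Z d z) = splice (Z :|: Z') (splice Z' c d) z.
  by apply/ffunP => i; rewrite !spliceE inE; case: (i \in Z'); rewrite ?orbT ?orbF.
pose G e := g (splice (Z :|: Z') e x) (splice (Z :|: Z') e y).
transitivity (#|word|%:R^-1 * \sum_d \sum_c G (splice Z' c d)).
  by congr (_ * _); apply: eq_bigr => d _; apply: eq_bigr => c _; rewrite !spliceU.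
by rewrite sum_splice2 -(mulr_natl (\sum_e G e)) mulrA mulVf ?mul1r.
Qed.

(* Exchanging the Z-parts of x and y with that of c is an involution on the
   triples with [agree Z x y]. *)
Lemma sum_agree_splice_sym (R : nmodType) Z (G : word -> word -> word -> word -> R) :
  \sum_x \sum_y (if agree Z x y then \sum_c G x y (splice Z c x) (splice Z c y) else 0) =
  \sum_x \sum_y (if agree Z x y then \sum_c G (splice Z c x) (splice Z c y) x y else 0).
Proof.
have sum_agreeE (H : word -> word -> word -> R) :
    \sum_x \sum_y (if agree Z x y then \sum_c H x y c else 0) =
    \sum_(p : word * word * word | agree Z p.1.1 p.1.2) H p.1.1 p.1.2 p.2.
  rewrite pair_bigA [RHS]big_mkcond.
  rewrite -(pair_bigA _ (fun u c => if agree Z u.1 u.2 then H u.1 u.2 c else 0)).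
  by apply: eq_bigr => -[x y] _ /=; case: ifP => //; rewrite big1.
have agree_refl x : agree Z x x by apply/agreeP.
have agree_spliceZ c x y : agree Z (splice Z c x) (splice Z c y).
  by apply/agreeP => i iZ; rewrite !spliceE iZ.
have spliceK x y c : agree Z x y -> splice Z (splice Z x c) (splice Z c y) = y.
  move/agreeP => xy; apply/ffunP => i; rewrite !spliceE.
  by case: (boolP (i \in Z)) => iZ //=; apply: xy.
pose tau (p : word * word * word) :=
  if agree Z p.1.1 p.1.2 then (splice Z p.2 p.1.1, splice Z p.2 p.1.2, splice Z p.1.1 p.2) else p.
have tauK : involutive tau.
  case=> [[x y] c]; rewrite /tau /=; have [xy|/negbTE nxy] := boolP (agree Z x y).
    by rewrite /= agree_spliceZ !spliceK.
  by rewrite /= nxy.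
rewrite !sum_agreeE (reindex_inj (inv_inj tauK)).
apply: eq_big => -[[x y] c]; rewrite /tau /=; first by case: ifP; rewrite /= ?agree_spliceZ.
by case: ifP => [xy _ | -> //]; rewrite /= spliceK ?agree_refl // spliceK.
Qed.

Lemma hs_dot_depolarize Z g h : hs_dot g (depolarize Z h) = hs_dot (depolarize Z g) h.
Proof.
pose G x y x' y' := (g x y)^* * h x' y'.
transitivity (#|word|%:R^-1 * \sum_x \sum_y
    (if agree Z x y then \sum_c G x y (splice Z c x) (splice Z c y) else 0)).
  rewrite mulr_sumr; apply: eq_bigr => x _; rewrite mulr_sumr; apply: eq_bigr => y _.
  by rewrite /depolarize; case: ifP; rewrite ?mulr0 // mulrCA -mulr_sumr.
rewrite sum_agree_splice_sym mulr_sumr; apply: eq_bigr => x _.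
rewrite mulr_sumr; apply: eq_bigr => y _.
rewrite /depolarize; case: ifP; rewrite ?conjC0 ?mul0r ?mulr0 // => _.
by rewrite rmorphM fmorphV /= conjC_nat rmorph_sum -mulrA mulr_suml.
Qed.

Lemma hs_dot_depolarize2 Z Z' g :
  hs_dot (depolarize Z g) (depolarize Z' g) = hs_dot g (depolarize (Z :|: Z') g).
Proof.
rewrite -hs_dot_depolarize; apply: eq_bigr => x _; apply: eq_bigr => y _.
by rewrite depolarizeU.
Qed.

End Depolarization.

Section Purity.
Variables (C : numClosedFieldType) (I A : finType) (psi : {ffun I -> A} -> C).
Local Notation word := {ffun I -> A}.
Implicit Types (U V W Z : {set I}) (x y : word).

(* With rho = |psi><psi|: [reduced W x y] = <x_W| rho_W |y_W> and
   [purity V] = Tr(rho_V^2). *)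
Definition density x y := psi x * (psi y)^*.
Definition reduced W x y := \sum_(x' | agree W x' x) psi x' * (psi (splice W y x'))^*.
Definition purity V :=
  \sum_x \sum_y psi x * psi y * (psi (splice V y x))^* * (psi (splice V x y))^*.
Definition scaled_purity V := (#|A| ^ #|V|)%:R * purity V.

Lemma purity_setC V : purity (~: V) = purity V.
Proof.
rewrite /purity exchange_big; apply: eq_bigr => x _; apply: eq_bigr => y _.
by rewrite !splice_setC [psi y * psi x]mulrC.
Qed.

Lemma depolarized_purityE Z :
  #|word|%:R * hs_dot density (depolarize Z density) =
  (\sum_x \sum_y (if agree Z x y then (density x y)^* * reduced (~: Z) x y else 0))
    *+ (#|A| ^ #|~: Z|).
Proof.
rewrite /hs_dot mulr_sumr -sumrMnl; apply: eq_bigr => x _.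
rewrite mulr_sumr -sumrMnl; apply: eq_bigr => y _.
have N0 : #|word|%:R != 0 :> C by rewrite pnatr_eq0 -lt0n; apply/card_gt0P; exists x.
rewrite /depolarize; case: ifP => _; last by rewrite !mulr0 mul0rn.
rewrite mulrCA [X in _ * X]mulrA mulfV // mul1r -mulrnAr; congr (_ * _).
pose h x' := psi x' * (psi (splice Z x' y))^*.
rewrite (eq_bigr (fun c => h (splice Z c x))) => [|c _]; last first.
  by rewrite /h /density; congr (_ * (psi _)^*); apply/ffunP => i; rewrite !spliceE; case: ifP.
by rewrite sum_splice; congr (_ *+ _); apply: eq_bigr => x' _; rewrite /h splice_setC.
Qed.

Lemma depolarized_purity Z :
  #|word|%:R * hs_dot density (depolarize Z density) = scaled_purity (~: Z).
Proof.
rewrite depolarized_purityE /scaled_purity mulr_natl; congr (_ *+ _).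
pose G x y x' := if agree Z x y && agree (~: Z) x' x
  then (density x y)^* * (psi x' * (psi (splice (~: Z) y x'))^*) else 0.
transitivity (\sum_x \sum_y \sum_x' G x y x').
  apply: eq_bigr => x _; apply: eq_bigr => y _; rewrite /G.
  by case: ifP => _; [rewrite /reduced mulr_sumr big_mkcond | rewrite big1].
rewrite exchange_big; under eq_bigr => y _ do rewrite exchange_big.
rewrite exchange_big; apply: eq_bigr => a _; apply: eq_bigr => b _.
rewrite /G -big_mkcond (eq_bigl (pred1 (splice (~: Z) a b))) => [|x]; last first.
  apply/andP/eqP => [[/agreeP xb /agreeP ax] | ->].
    apply/ffunP => i; rewrite spliceE; case: (boolP (i \in ~: Z)) => [/ax //|].
    by rewrite inE negbK => /xb.
  by split; apply/agreeP => i iZ; rewrite spliceE ?iZ // inE iZ.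
by rewrite big_pred1_eq /density rmorphM /= conjCK; ring.
Qed.

Lemma scaled_purity_subset_sum :
  exists2 a : {set I} -> C, forall U, 0 <= a U &
    forall V, scaled_purity V = \sum_(U : {set I} | U \subset V) a U.
Proof.
pose v Z (p : word * word) := depolarize Z density p.1 p.2.
pose F Z := hs_dot density (depolarize Z density).
have dot_v Z Z' : \sum_p (v Z p)^* * v Z' p = F (Z :|: Z').
  by rewrite /F -hs_dot_depolarize2 /hs_dot pair_bigA.
exists (fun U => #|word|%:R * incl_excl_weight v U) => [U|V].
  by rewrite mulr_ge0 ?incl_excl_weight_ge0.
by rewrite -mulr_sumr (sum_incl_excl_weight dot_v) depolarized_purity setCK.
Qed.

Hypothesis psi_unit : \sum_x psi x * (psi x)^* = 1.

Lemma scaled_purity0 : scaled_purity set0 = 1.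
Proof.
have splice0 x y : splice set0 x y = y by apply/ffunP => i; rewrite spliceE inE.
rewrite /scaled_purity cards0 expn0 mul1r /purity -[RHS]mulr1 -{1}psi_unit mulr_suml.
apply: eq_bigr => x _; rewrite -psi_unit mulr_sumr; apply: eq_bigr => y _.
by rewrite !splice0; ring.
Qed.

Lemma scaled_purity_uniform W : (0 < #|A|)%N ->
  (forall x y, reduced W x y = if agree W x y then (#|A| ^ #|W|)%:R^-1 else 0) ->
  scaled_purity W = 1.
Proof.
move=> A_gt0 reducedW; rewrite -[W]setCK -depolarized_purity depolarized_purityE setCK.
have qW0 : (#|A| ^ #|W|)%:R != 0 :> C by rewrite pnatr_eq0 -lt0n expn_gt0 A_gt0.
have agreeC x y : agree (~: W) x y -> agree W x y -> x = y.
  move=> /agreeP xyC /agreeP xyW; apply/ffunP => i.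
  by case: (boolP (i \in W)) => [/xyW | iW]; last by apply: xyC; rewrite inE.
rewrite (eq_bigr (fun x => (density x x)^* * (#|A| ^ #|W|)%:R^-1)) => [|x _].
  by rewrite -mulr_suml -rmorph_sum psi_unit rmorph1 mul1r -mulr_natr mulVf.
have agree_refl Z : agree Z x x by apply/agreeP.
rewrite (bigD1 x) //= reducedW !agree_refl big1 ?addr0 // => y yx.
rewrite reducedW; case: ifP => // xyC; case: ifP => [xyW|]; last by rewrite mulr0.
by case/eqP: yx; rewrite (agreeC _ _ xyC xyW).
Qed.

Lemma scaled_purity_setC V :
  scaled_purity V * (#|A| ^ #|~: V|)%:R = (#|A| ^ #|V|)%:R * scaled_purity (~: V).
Proof. by rewrite /scaled_purity purity_setC mulrAC mulrA. Qed.

Lemma scaled_purity_co_uniform V : (0 < #|A|)%N ->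
  scaled_purity (~: V) = 1 -> (#|~: V| <= #|V|)%N ->
  scaled_purity V = (#|A| ^ (#|V| - #|~: V|))%:R.
Proof.
move=> A_gt0 fVC leVCV; apply: (mulIf (_ : (#|A| ^ #|~: V|)%:R != 0)).
  by rewrite pnatr_eq0 -lt0n expn_gt0 A_gt0.
by rewrite scaled_purity_setC fVC mulr1 -natrM -expnD subnK.
Qed.

Theorem uniform_purity_inequality k : (0 < #|A|)%N -> (0 < k)%N -> (k.*2 <= #|I|)%N ->
  (forall W, #|W| = k -> forall x y,
     reduced W x y = if agree W x y then (#|A| ^ k)%:R^-1 else 0) ->
  ((#|I| - k).+1 * #|A| ^ (#|I| - k.*2) <=
     (#|I| - k.*2) * #|A| ^ (#|I| - k.*2).+2 + k.+1)%N.
Proof.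
move=> A_gt0 k_gt0 le_2k_I uniform.
have [a a_ge0 sum_a] := scaled_purity_subset_sum.
have a0 : a set0 = 1 by have := sum_a set0; rewrite big_subset0 scaled_purity0.
have le_k_I : (k <= #|I|)%N by lia.
have sum_a_k W : #|W| = k -> \sum_(U : {set I} | U \subset W) a U = 1.
  by move=> cW; rewrite -sum_a scaled_purity_uniform // cW; apply: uniform.
have purity_small W : (#|W| <= k)%N -> scaled_purity W = 1.
  by move=> leWk; rewrite sum_a (sum_subset_small a_ge0 a0 le_k_I).
have [S _ cS] : exists2 S : {set I}, set0 \subset S & #|S| = k.-1.
  by apply: exists_superset_card; rewrite cards0; lia.
have cT : #|~: S| = (#|I| - k).+1 by rewrite cardsCs setCK cS; lia.
have fT : scaled_purity (~: S) = (#|A| ^ (#|I| - k.*2).+2)%:R.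
  rewrite scaled_purity_co_uniform ?setCK ?purity_small ?cS ?cT //; [congr (_ ^ _)%:R | |]; lia.
have fTi i : i \in ~: S -> scaled_purity (~: S :\ i) = (#|A| ^ (#|I| - k.*2))%:R.
  move=> iT; have cTi : #|~: S :\ i| = (#|I| - k)%N by move: (cardsD1 i (~: S)); rewrite iT cT; lia.
  have cCTi : #|~: (~: S :\ i)| = k by move: (cardsC (~: S :\ i)); rewrite cTi; lia.
  rewrite scaled_purity_co_uniform ?purity_small ?cTi ?cCTi //; [congr (_ ^ _)%:R | ]; lia.
have ltkT : (k < #|~: S|)%N by rewrite cT; lia.
have := sum_setD1_le a_ge0 a0 le_k_I sum_a_k ltkT.
rewrite -sum_a fT (eq_bigr (fun=> (#|A| ^ (#|I| - k.*2))%:R)) => [|i iT]; last first.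
  by rewrite -sum_a fTi.
rewrite sumr_const cT -mulrnA -!natrM -natrD ler_nat mulnC.
by have -> : ((#|I| - k).+1 - k.+1 = #|I| - k.*2)%N by lia.
Qed.

End Purity.

Lemma reduced_entryE q n (psi : qvec q n) S a b :
  reduced_entry psi S a b = reduced psi S a b.
Proof.
apply: eq_bigr => x _; rewrite (eq_bigl (pred1 (splice S b x))) ?big_pred1_eq // => y.
apply/andP/eqP => [[/agreeP yb /forallP xy] | ->].
  apply/ffunP => i; rewrite spliceE; case: ifP => iS; first exact: yb.
  by apply/esym/eqP; apply: implyP (xy i) _; rewrite iS.
split; first by apply/agreeP => i iS; rewrite spliceE iS.
by apply/forallP => i; apply/implyP => /negbTE iS; rewrite spliceE iS.
Qed.

Lemma purity_inequality_fails q m k : (2 <= q)%N -> (0 < m)%N -> (2 * m * q ^ 2 <= k.+1)%N ->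
  (m * q ^ m.+2 + k.+1 < (k + m).+1 * q ^ m)%N.
Proof.
move=> q2 m_gt0 le_k; rewrite -addn2 expnD.
have Q2 : (2 <= q ^ m)%N by rewrite (leq_trans q2) // -{1}(expn1 q) leq_pexp2l // ltnW.
have := leq_mul le_k (leqnn (q ^ m).-1).
move: Q2; set Q := (q ^ m)%N; set P := (q ^ 2)%N => Q2; nia.
Qed.

Lemma ame_defect_params l q n k m : k = (n./2 - l)%N -> m = (n - k.*2)%N ->
  (0 < l)%N -> (2 <= q)%N -> ((9 * l + 4) * q ^ 2 < n)%N ->
  [/\ (0 < k)%N, (k.*2 <= n)%N, (0 < m)%N & (2 * m * q ^ 2 <= k.+1)%N].
Proof.
move=> k_def m_def l_gt0 q2; have P4 : (4 <= q ^ 2)%N by rewrite (@leq_exp2r 2 q 2).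
move: (q ^ 2)%N P4 => P P4; rewrite mulnDl -mulnA mulSn => lt_n.
have n_eq := odd_double_half n; rewrite -!muln2 in n_eq m_def *.
have le_m : (m <= (2 * l).+1)%N by case: (odd n) n_eq => /=; lia.
have le_mP : (m * P <= P + 2 * (l * P))%N by rewrite mulnA -mulSn leq_mul2r le_m orbT.
have le_lP : (4 * l <= l * P)%N by rewrite mulnC leq_mul2l P4 orbT.
rewrite -mulnA; case: (odd n) n_eq => /= n_eq; split; lia.
Qed.

Theorem corollary2 :
  forall l : nat, (2 <= l)%N ->
  exists c : Rdefinitions.R,
  exists q0 : nat,
  forall q : nat, (q0 <= q)%N ->
  forall n : nat, c * (q ^ 2)%:R < n%:R ->
  ~ exists psi : qvec q n, AME_defect l psi.
Proof.
move=> l l2; exists (9 * l + 4)%:R, 2%N => q q2 n.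
rewrite -natrM ltr_nat => lt_n [psi [unit_psi uniform_psi]].
have [k_gt0 le_2k_n m_gt0 le_mq2] := ame_defect_params (erefl _) (erefl _) (ltnW l2) q2 lt_n.
set k := (n./2 - l)%N in uniform_psi k_gt0 le_2k_n m_gt0 le_mq2.
set m := (n - k.*2)%N in m_gt0 le_mq2.
have uniform (W : {set 'I_n}) : #|W| = k -> forall x y,
    reduced psi W x y = if agree W x y then (#|'I_q| ^ k)%:R^-1 else 0.
  by move=> cW x y; rewrite card_ord -reduced_entryE uniform_psi.
have q_gt0 : (0 < #|'I_q|)%N by rewrite card_ord ltnW.
have le_2k_card : (k.*2 <= #|'I_n|)%N by rewrite card_ord.
have := uniform_purity_inequality unit_psi q_gt0 k_gt0 le_2k_card uniform.
rewrite !card_ord -/m; apply/negP; rewrite -ltnNge.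
have -> : (n - k).+1 = (k + m).+1 by rewrite /m; lia.
exact: purity_inequality_fails.
Qed.
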